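(* For every $n\ge0$, the localization $(\underline n\downarrow\Delta)[\mathcal I^{-1}]$, obtained from the coslice category $(\underline n\downarrow\Delta)$ by formally inverting all morphisms whose underlying map is injective, is a thin category.
   Context: $\Delta$ denotes the category whose objects are the finite totally ordered sets $\underline k=\{1,\dots,k\}$ for $k\ge 0$ (including the empty set $\underline 0$) and whose morphisms are order-preserving maps. $\mathcal I\subseteq\Delta$ is the subcategory of injective order-preserving maps. Objects of $(\underline n\downarrow\Delta)$ are order-preserving maps $\underline n\to\underline k$ and morphisms are order-preserving maps $\underline k\to\underline k'$ making the triangle commute. A category is thin if any two parallel morphisms are equal. *)

From mathcomp Require Import all_boot.
Set Implicit Arguments. Unset Strict Implicit. Unset Printing Implicit Defensive.

(* The finite ordinal {1,...,k} is modelled by 'I_k = {0,...,k-1}. *)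

Definition monob (k l : nat) (g : {ffun 'I_k -> 'I_l}) : bool :=
  [forall i : 'I_k, forall j : 'I_k, (i <= j) ==> (g i <= g j)].

(* Objects of the coslice category (n ↓ Δ): order-preserving maps n -> k. *)
Record cobj (n : nat) := CObj {
  cdim : nat;
  cmap : {ffun 'I_n -> 'I_cdim};
  cmap_mono : monob cmap }.

Definition chom (n : nat) (a b : cobj n) :=
  { g : {ffun 'I_(cdim a) -> 'I_(cdim b)} |
      monob g && [forall i : 'I_n, g (cmap a i) == cmap b i] }.

Definition cinj (n : nat) (a b : cobj n) (w : chom a b) : bool :=
  injectiveb (fun x => sval w x).

Section Zigzag.
Variable n : nat.

(* Zigzags: paths in the free category on the morphisms of (n ↓ Δ)
   together with formal reverses of the morphisms in I. *)
Inductive zz : cobj n -> cobj n -> Type :=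
| znil (a : cobj n) : zz a a
| zfwd (a b c : cobj n) (g : chom a b) : zz b c -> zz a c
| zbwd (a b c : cobj n) (w : chom b a) : cinj w -> zz b c -> zz a c.

Fixpoint zcat (a b c : cobj n) (p : zz a b) : zz b c -> zz a c :=
  match p in zz a b return zz b c -> zz a c with
  | znil _ => fun q => q
  | zfwd _ _ _ g p' => fun q => zfwd g (zcat p' q)
  | zbwd _ _ _ w hw p' => fun q => zbwd hw (zcat p' q)
  end.

Inductive zbasic : forall a b : cobj n, zz a b -> zz a b -> Prop :=
| zb_comp (a b c : cobj n) (g : chom a b) (h : chom b c) (k : chom a c) :
    (forall x, sval k x = sval h (sval g x)) ->
    zbasic (zfwd g (zfwd h (znil c))) (zfwd k (znil c))
| zb_id (a : cobj n) (k : chom a a) :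
    (forall x, sval k x = x) ->
    zbasic (zfwd k (znil a)) (znil a)
| zb_inv_l (a b : cobj n) (w : chom a b) (hw : cinj w) :
    zbasic (zfwd w (zbwd hw (znil a))) (znil a)
| zb_inv_r (a b : cobj n) (w : chom a b) (hw : cinj w) :
    zbasic (zbwd hw (zfwd w (znil b))) (znil b).

(* Morphism equality in the localization (n ↓ Δ)[I^{-1}]: the smallest
   equivalence relation on zigzags a -> b that is a congruence for
   concatenation and contains the generating relations. *)
Inductive loc_eq : forall a b : cobj n, zz a b -> zz a b -> Prop :=
| le_refl a b (p : zz a b) : loc_eq p p
| le_sym a b (p q : zz a b) : loc_eq p q -> loc_eq q p
| le_trans a b (p q r : zz a b) : loc_eq p q -> loc_eq q r -> loc_eq p r
| le_step a x y b (p : zz a x) (l r : zz x y) (q : zz y b) :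
    zbasic l r -> loc_eq (zcat p (zcat l q)) (zcat p (zcat r q)).

End Zigzag.

Definition loc_thin (n : nat) : Prop :=
  forall (a b : cobj n) (p q : zz a b), loc_eq p q.

From mathcomp Require Import all_boot order.

Set Implicit Arguments.
Unset Strict Implicit.
Unset Printing Implicit Defensive.

(* Write a ≼ b when every inequality a i <= a j between values of the
   structure map a : n -> k also holds for b.  A morphism a -> b forces
   a ≼ b, and so does an injective morphism b -> a (injective monotone maps
   reflect the order); hence every zigzag a ~> b forces a ≼ b.

   Every object a factors as a surjection coim a : n -> im a followed by the
   injective inclusion incl a : im a -> a.  Out of a surjective object there
   is at most one morphism, and a morphism coim a -> coim b exists as soon as a ≼ b.
   So for a ≼ b all the "normal forms" (incl a)^-1 ; m ; incl b agree, and
   we show by induction on zigzags that every zigzag a ~> b is equal in the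
   localization to each of them, which makes any two parallel zigzags equal. *)

Lemma inj_mono_ord k l (f : 'I_k -> 'I_l) :
  injective f -> {homo f : x y / (x <= y)%N} -> {mono f : x y / (x <= y)%N}.
Proof.
move=> finj fle.
exact: Order.TotalTheory.le_mono (Order.POrderTheory.inj_homo_lt finj fle).
Qed.

Lemma le_enum_val_ord k (A : {pred 'I_k}) :
  {mono @Order.enum_val _ _ A : i j / (i <= j)%N}.
Proof. exact: (Order.le_enum_val (@Order.TotalTheory.le_total _ 'I_k)). Qed.

Lemma monobP k l (f : {ffun 'I_k -> 'I_l}) :
  reflect {homo f : i j / i <= j} (monob f).
Proof.
apply: (iffP forallP) => [mono_f i j | mono_f i].
  by move/forallP: (mono_f i) => /(_ j) /implyP.
by apply/forallP => j; apply/implyP/mono_f.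
Qed.

Section CosliceLocalization.
Variable n : nat.
Implicit Types a b c d : cobj n.

Lemma hom_mono a b (g : chom a b) : {homo sval g : x y / x <= y}.
Proof. by case: g => g /= /andP[/monobP]. Qed.

Lemma hom_comm a b (g : chom a b) i : sval g (cmap a i) = cmap b i.
Proof. by case: g => g /= /andP[_ /forallP/(_ i)/eqP]. Qed.

Lemma hom_ext a b (g h : chom a b) : sval g =1 sval h -> g = h.
Proof. by move=> gh; apply/val_inj/ffunP. Qed.

Lemma mkhom_proof a b (f : {ffun 'I_(cdim a) -> 'I_(cdim b)}) :
  {homo f : x y / x <= y} -> (forall i, f (cmap a i) = cmap b i) ->
  monob f && [forall i : 'I_n, f (cmap a i) == cmap b i].
Proof.
by move=> fmono fcomm; apply/andP; split; [apply/monobP | apply/forallP=> i; apply/eqP].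
Qed.

Definition mkhom a b (f : {ffun 'I_(cdim a) -> 'I_(cdim b)})
    (fmono : {homo f : x y / x <= y}) (fcomm : forall i, f (cmap a i) = cmap b i) :
  chom a b := exist _ f (mkhom_proof fmono fcomm).

Section Composition.
Variables (a b c : cobj n) (g : chom a b) (h : chom b c).

Let gh : {ffun 'I_(cdim a) -> 'I_(cdim c)} := [ffun x => sval h (sval g x)].

Lemma hcomp_mono : {homo gh : x y / x <= y}.
Proof. by move=> x y xy; rewrite !ffunE; apply/hom_mono/hom_mono. Qed.

Lemma hcomp_comm i : gh (cmap a i) = cmap c i.
Proof. by rewrite ffunE !hom_comm. Qed.

Definition hcomp : chom a c := mkhom hcomp_mono hcomp_comm.

End Composition.

Lemma hcompE a b c (g : chom a b) (h : chom b c) x :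
  sval (hcomp g h) x = sval h (sval g x).
Proof. by rewrite ffunE. Qed.

Definition refines a b :=
  forall i j : 'I_n, cmap a i <= cmap a j -> cmap b i <= cmap b j.

Lemma refines_trans a b c : refines a b -> refines b c -> refines a c.
Proof. by move=> ab bc i j /ab /bc. Qed.

Lemma refines_eq a b i j : refines a b -> cmap a i = cmap a j -> cmap b i = cmap b j.
Proof. by move=> ab aij; apply/val_inj/eqP; rewrite eqn_leq !ab ?aij. Qed.

Lemma refines_hom a b (g : chom a b) : refines a b.
Proof. by move=> i j /(hom_mono g); rewrite !hom_comm. Qed.

Lemma refines_inj a b (w : chom b a) : cinj w -> refines a b.
Proof.
move=> /injectiveP winj i j; rewrite -!(hom_comm w).
by rewrite (inj_mono_ord winj (hom_mono w)).
Qed.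

(* The image factorization a = incl a ∘ coim a.  The image of a is
   enumerated increasingly; srank a i is the rank of a i in it. *)

Definition img a : {set 'I_(cdim a)} := [set x in codom (cmap a)].

Lemma mem_img a i : cmap a i \in img a.
Proof. by rewrite inE codom_f. Qed.

Definition srank a i : 'I_#|img a| := Order.enum_rank_in (mem_img a i) (cmap a i).

Lemma srankK a i : Order.enum_val (srank a i) = cmap a i.
Proof. by rewrite Order.enum_rankK_in ?mem_img. Qed.

Lemma srank_le a i j : (srank a i <= srank a j) = (cmap a i <= cmap a j).
Proof. by rewrite -le_enum_val_ord !srankK. Qed.

Lemma enum_val_codom a (r : 'I_#|img a|) : Order.enum_val r \in codom (cmap a).
Proof. by have := Order.enum_valP r; rewrite inE. Qed.

Definition pre a (r : 'I_#|img a|) : 'I_n := iinv (enum_val_codom r).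

Lemma preK a (r : 'I_#|img a|) : srank a (pre r) = r.
Proof. by apply: Order.enum_val_inj; rewrite srankK f_iinv. Qed.

Lemma srank_eq a i j : cmap a i = cmap a j -> srank a i = srank a j.
Proof. by move=> aij; apply: Order.enum_val_inj; rewrite !srankK. Qed.

Lemma coim_mono a : monob [ffun i => srank a i].
Proof.
by apply/monobP => i j ij; rewrite !ffunE srank_le; apply: (monobP _ (cmap_mono a)).
Qed.

Definition coim a : cobj n := CObj (coim_mono a).

Lemma coimE a i : cmap (coim a) i = srank a i.
Proof. exact: ffunE. Qed.

Definition incl_fun a : {ffun 'I_(cdim (coim a)) -> 'I_(cdim a)} :=
  [ffun r => Order.enum_val r].

Lemma incl_mono a : {homo incl_fun a : x y / x <= y}.
Proof. by move=> x y xy; rewrite !ffunE le_enum_val_ord. Qed.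

Lemma incl_comm a i : incl_fun a (cmap (coim a) i) = cmap a i.
Proof. by rewrite ffunE coimE srankK. Qed.

Definition incl a : chom (coim a) a := mkhom (@incl_mono a) (incl_comm a).

Lemma incl_inj a : cinj (incl a).
Proof. by apply/injectiveP => x y; rewrite /= !ffunE; apply: Order.enum_val_inj. Qed.

Lemma coim_hom_uniq a b (g h : chom (coim a) b) : g = h.
Proof. by apply: hom_ext => r; rewrite -(preK r) -coimE !hom_comm. Qed.

Section CoimHom.
Variables (a c : cobj n) (ac : refines a c).

Let f : {ffun 'I_(cdim (coim a)) -> 'I_(cdim (coim c))} := [ffun r => srank c (pre r)].

Lemma coim_hom_mono : {homo f : x y / x <= y}.
Proof. by move=> r s rs; rewrite !ffunE srank_le ac // -srank_le !preK. Qed.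

Lemma coim_hom_comm i : f (cmap (coim a) i) = cmap (coim c) i.
Proof.
rewrite !ffunE; apply: srank_eq; apply: refines_eq ac _.
by rewrite -!srankK preK.
Qed.

Definition coim_hom : chom (coim a) (coim c) := mkhom coim_hom_mono coim_hom_comm.

End CoimHom.

Lemma zcatA a b c d (p : zz a b) (q : zz b c) (r : zz c d) :
  zcat (zcat p q) r = zcat p (zcat q r).
Proof. by elim: p q r => //= [x y z g p IH|x y z w hw p IH] q r; rewrite IH. Qed.

Lemma zcatp0 a b (p : zz a b) : zcat p (znil b) = p.
Proof. by elim: p => //= [x y z g p IH|x y z w hw p IH]; rewrite IH. Qed.

Lemma loc_eq_cat a b (p q : zz a b) : loc_eq p q ->
  forall c d (x : zz c a) (y : zz b d), loc_eq (zcat x (zcat p y)) (zcat x (zcat q y)).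
Proof.
elim=> {a b p q} [a b p|a b p q _ IH|a b p q r _ IH1 _ IH2|a x0 y0 b p l r q lr] c d x y.
- exact: le_refl.
- exact: le_sym.
- exact: le_trans (IH1 _ _ _ _) (IH2 _ _ _ _).
- by have := le_step (zcat x p) (zcat q y) lr; rewrite !zcatA.
Qed.

Lemma loc_fwd a b c (g : chom a b) (p q : zz b c) :
  loc_eq p q -> loc_eq (zfwd g p) (zfwd g q).
Proof. by move=> /loc_eq_cat /(_ _ _ (zfwd g (znil b)) (znil c)); rewrite /= !zcatp0. Qed.

Lemma loc_bwd a b c (w : chom b a) (hw : cinj w) (p q : zz b c) :
  loc_eq p q -> loc_eq (zbwd hw p) (zbwd hw q).
Proof. by move=> /loc_eq_cat /(_ _ _ (zbwd hw (znil b)) (znil c)); rewrite /= !zcatp0. Qed.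

Lemma loc_comp a b c d (g : chom a b) (h : chom b c) (q : zz c d) :
  loc_eq (zfwd g (zfwd h q)) (zfwd (hcomp g h) q).
Proof. by apply: (le_step (znil a) q (zb_comp _)) => x; rewrite hcompE. Qed.

Lemma loc_inv_l a b d (w : chom a b) (hw : cinj w) (q : zz a d) :
  loc_eq (zfwd w (zbwd hw q)) q.
Proof. exact: (le_step (znil a) q (zb_inv_l hw)). Qed.

Lemma loc_inv_r a b d (w : chom a b) (hw : cinj w) (q : zz b d) :
  loc_eq (zbwd hw (zfwd w q)) q.
Proof. exact: (le_step (znil b) q (zb_inv_r hw)). Qed.

Definition nf a b (m : chom (coim a) (coim b)) : zz a b :=
  zbwd (incl_inj a) (zfwd m (zfwd (incl b) (znil b))).

Lemma nil_nf a (m : chom (coim a) (coim a)) : loc_eq (znil a) (nf m).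
Proof.
apply: le_sym; apply: le_trans (loc_bwd _ (loc_comp _ _ _)) _.
by rewrite (coim_hom_uniq (hcomp m (incl a)) (incl a)); apply: loc_inv_r.
Qed.

Lemma fwd_nf a b c (g : chom a b)
    (m : chom (coim b) (coim c)) (m' : chom (coim a) (coim c)) :
  loc_eq (zfwd g (nf m)) (nf m').
Proof.
pose gc := coim_hom (refines_hom g).
have gE : hcomp (incl a) g = hcomp gc (incl b) by apply: coim_hom_uniq.
apply: le_trans (le_sym (loc_inv_r (incl_inj a) _)) _.
apply: le_trans (loc_bwd _ (loc_comp _ _ _)) _; rewrite gE.
apply: le_trans (loc_bwd _ (le_sym (loc_comp _ _ _))) _.
apply: le_trans (loc_bwd _ (loc_fwd _ (loc_inv_l _ _))) _.
by apply/loc_bwd; rewrite (coim_hom_uniq m' (hcomp gc m)); apply: loc_comp.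
Qed.

Lemma bwd_nf a b c (w : chom b a) (hw : cinj w)
    (m : chom (coim b) (coim c)) (m' : chom (coim a) (coim c)) :
  loc_eq (zbwd hw (nf m)) (nf m').
Proof.
apply: le_trans (loc_bwd _ (le_sym (fwd_nf w m' m))) _.
exact: loc_inv_r.
Qed.

Lemma zz_nf a b (p : zz a b) : refines a b /\ forall m, loc_eq p (nf m).
Proof.
elim: p => {a b} [a|a b c g p [bc IH]|a b c w hw p [bc IH]].
- by split=> [|m]; [exact: (fun i j => id) | exact: nil_nf].
- split=> [|m]; first exact: refines_trans (refines_hom g) bc.
  exact: le_trans (loc_fwd g (IH (coim_hom bc))) (fwd_nf _ _ _).
- split=> [|m]; first exact: refines_trans (refines_inj hw) bc.
  exact: le_trans (loc_bwd hw (IH (coim_hom bc))) (bwd_nf _ _ _).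
Qed.

End CosliceLocalization.

Theorem mainTheorem9 (n : nat) :
  forall (a b : cobj n) (p q : zz a b), loc_eq p q.
Proof.
move=> a b p q.
have [ab p_nf] := zz_nf p; have [_ q_nf] := zz_nf q.
exact: le_trans (p_nf (coim_hom ab)) (le_sym (q_nf (coim_hom ab))).
Qed.
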